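(* In the setting described in the context, suppose that for every $i\in[k]$ and every $(\mathcal F_T)$-stopping time $\tau$ that is almost surely finite, there exist nonnegative random variables $E^+_{i\tau},E^-_{i\tau}$ (not depending on $\beta$) with $\mathbb E[E^+_{i\tau}]\le 1$, $\mathbb E[E^-_{i\tau}]\le 1$, such that for every $\beta\in(0,1)$, almost surely, $\mathbb I\{\theta_i\le L_{i\tau}(\beta)\}\le\mathbb I\{E^-_{i\tau}\ge 1/\beta\}$ and $\mathbb I\{\theta_i\ge U_{i\tau}(\beta)\}\le\mathbb I\{E^+_{i\tau}\ge 1/\beta\}$. Then for every $\alpha\in(0,1)$ and every almost surely finite $(\mathcal F_T)$-stopping time $\tau$, with $\tilde\alpha=\alpha|\hat{\mathcal S}_\tau|/(2k)$, we have $\mathrm{sFCR}(\tilde\alpha)\le\alpha$.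
   Context: Setting: $(\Omega,\mathcal F,\mathbb P)$ is a probability space with a filtration $(\mathcal F_T)_{T\in\mathbb N}$; $k\ge2$, $m\in\{1,\dots,k-1\}$, $\alpha\in(0,1)$; $\theta_1\ge\dots\ge\theta_k$ are real parameters; $[k]=\{1,\dots,k\}$. For each $i\in[k]$ and $\beta\in(0,1)$, $(L_{iT}(\beta))_{T}$ and $(U_{iT}(\beta))_T$ are $(\mathcal F_T)$-adapted processes with values in $[-\infty,\infty]$, with $L_{iT}(\beta)\le U_{iT}(\beta)$, satisfying $\mathbb P(\exists T\in\mathbb N:\theta_i\le L_{iT}(\beta))\le\beta$ and $\mathbb P(\exists T\in\mathbb N:\theta_i\ge U_{iT}(\beta))\le\beta$. SCS procedure: set $\alpha_{km}=\alpha/\{2m(k-m)\}$, $\hat{\mathcal S}_0=[k]$, and for $T\in\mathbb N$ let $L^{(m)}_T(\alpha_{km})$ be the $m$-th largest among $\{L_{iT}(\alpha_{km}):i\in\hat{\mathcal S}_{T-1}\}$ and $\hat{\mathcal S}_T=\hat{\mathcal S}_{T-1}\setminus\{i\in\hat{\mathcal S}_{T-1}:U_{iT}(\alpha_{km})<L^{(m)}_T(\alpha_{km})\}$. Stopped false coverage rate: for a stopping time $\tau$ and a (possibly random, $\mathcal F_\tau$-measurable) level $a$, $\mathrm{sFCR}(a)=\mathbb E\Big[\sum_{i\in\hat{\mathcal S}_\tau}\frac{\mathbb I\{\theta_i\notin(L_{i\tau}(a),U_{i\tau}(a))\}}{|\hat{\mathcal S}_\tau|}\Big]$. *)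

From HB Require Import structures.
From mathcomp Require Import all_boot all_order all_algebra.
From mathcomp Require Import all_classical all_reals all_analysis.
From mathcomp Require Import measurable_realfun.
Set Implicit Arguments. Unset Strict Implicit. Unset Printing Implicit Defensive.
Import Order.TTheory GRing.Theory Num.Theory.
Local Open Scope classical_set_scope.
Local Open Scope ring_scope.

Section Defs.
Context {R : realType}.

Definition mth_largest (m : nat) (s : seq (\bar R)) : \bar R :=
  nth -oo%E (sort (fun x y : \bar R => (y <= x)%E) s) m.-1.

(* SCS selected set at time n (times are positive naturals; n = 0 gives
   the initial set [k]).  [Lb i t], [Ub i t] are the values
   L_{it}(alpha_km), U_{it}(alpha_km) at a fixed outcome. *)
Fixpoint scs_set (k m : nat) (Lb Ub : 'I_k -> nat -> \bar R) (n : nat)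
  : {set 'I_k} :=
  match n with
  | 0 => [set: 'I_k]
  | n'.+1 =>
      let S := scs_set m Lb Ub n' in
      let lm := mth_largest m [seq Lb i n'.+1 | i <- enum S] in
      [set i in S | ~~ (Ub i n'.+1 < lm)%E]
  end.

Definition alpha_km (k m : nat) (alpha : R) : R :=
  alpha / (2 * m * (k - m))%:R.

(* value of an (option nat)-valued stopping time; the arbitrary default 0
   is only used on the null set {tau = None} *)
Definition stop_val {T : Type} (tau : T -> option nat) (w : T) : nat :=
  odflt 0%N (tau w).

Definition scs_at {T : Type} (k m : nat) (alpha : R)
  (L U : 'I_k -> R -> nat -> T -> \bar R) (tau : T -> option nat) (w : T)
  : {set 'I_k} :=
  scs_set m (fun i t => L i (alpha_km k m alpha) t w)
            (fun i t => U i (alpha_km k m alpha) t w) (stop_val tau w).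

(* Stopping time w.r.t. a filtration F (times in positive naturals,
   value None = infinity) *)
Definition is_stopping_time {T : Type} (F : nat -> set (set T))
  (tau : T -> option nat) : Prop :=
  (forall w t, tau w = Some t -> (0 < t)%N) /\
  (forall n, F n [set w | exists2 t, tau w = Some t & (t <= n)%N]).

Definition sFCR {d} {T : measurableType d} (P : probability T R) (k : nat)
  (theta : 'I_k -> R) (L U : 'I_k -> R -> nat -> T -> \bar R)
  (tau : T -> option nat) (S : T -> {set 'I_k}) (a : T -> R) : \bar R :=
  (\int[P]_w
     ((\sum_(i in S w)
         (~~ ((L i (a w) (stop_val tau w) w < (theta i)%:E)%E &&
              ((theta i)%:E < U i (a w) (stop_val tau w) w)%E))%:R)
      / #|S w|%:R)%:E)%E.

End Defs.

From HB Require Import structures.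
From mathcomp Require Import all_boot all_order all_algebra.
From mathcomp Require Import all_classical all_reals all_analysis.
From mathcomp Require Import measurable_realfun ring lra.
Import Order.TTheory GRing.Theory Num.Theory.
Local Open Scope classical_set_scope.
Local Open Scope ring_scope.

(* At level
   [b = c |S|], each miscovered parameter forces [E^+_i >= 1/b] or
   [E^-_i >= 1/b], so it costs at most [b (E^+_i + E^-_i)]; dividing by [|S|]
   cancels the random size, and the false coverage proportion is bounded by
   [c \sum_i (E^+_i + E^-_i)], whose expectation is at most [2 c k = alpha].
   The level is random, but takes only the [k] values [c j], at which the
   almost sure e-value bounds hold simultaneously. *)

Definition miscovered {R : realType} (l u : \bar R) (t : R) : bool :=
  ~~ ((l < t%:E)%E && (t%:E < u)%E).

Section integral_bounds.
Local Open Scope ereal_scope.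
Context d (T : measurableType d) (R : realType).
Variable mu : {measure set T -> \bar R}.

Lemma ge0_le_integral_nomeas (f1 f2 : T -> \bar R) :
  (forall x, 0 <= f1 x) -> (forall x, f1 x <= f2 x) ->
  \int[mu]_x f1 x <= \int[mu]_x f2 x.
Proof.
move=> f10 f12.
have f20 x : 0 <= f2 x by apply: le_trans (f12 x).
rewrite !ge0_integralTE//; apply: ereal_sup_le => _ [h /= hf <-].
by exists h => //= x; apply: le_trans (hf x) (f12 x).
Qed.

(* A bounded [f1] exceeds [f2] by at most [M] on the null set, and
   [f2 + M 1_N] is measurable with the same integral as [f2]. *)
Lemma ae_ge0_le_integral_bounded (M : R) (f1 f2 : T -> \bar R) :
  (0 <= M)%R -> (forall x, 0 <= f1 x <= M%:E) ->
  measurable_fun setT f2 -> (forall x, 0 <= f2 x) ->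
  {ae mu, forall x, f1 x <= f2 x} ->
  \int[mu]_x f1 x <= \int[mu]_x f2 x.
Proof.
move=> M0 f1M mf2 f20 [N [mN muN f12N]].
have indN0 x : 0 <= M%:E * (\1_N x)%:E by rewrite mule_ge0 ?lee_fin.
apply: (@le_trans _ _ (\int[mu]_x (f2 x + M%:E * (\1_N x)%:E))).
  apply: ge0_le_integral_nomeas => [x|x]; first by case/andP: (f1M x).
  have [Nx|nNx] := pselect (N x).
    rewrite indicE mem_set// mule1; apply: lee_paddl => //.
    by case/andP: (f1M x).
  rewrite indicE memNset// mule0 adde0.
  by apply: contrapT => f12x; exact: nNx (f12N x f12x).
rewrite ge0_integralD//; last first.
  by apply: measurable_funeM; apply/measurable_EFinP; exact: measurable_indic.
rewrite ge0_integralZl_EFin//; last first.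
  by apply/measurable_EFinP; exact: measurable_indic.
by rewrite integral_indic// setIT muN mule0 adde0.
Qed.

Lemma integral_sum_evalues_le (n : nat) (Ep Em : 'I_n -> T -> \bar R) :
  (forall i, measurable_fun setT (Ep i)) ->
  (forall i, measurable_fun setT (Em i)) ->
  (forall i x, 0 <= Ep i x) -> (forall i x, 0 <= Em i x) ->
  (forall i, \int[mu]_x Ep i x <= 1) -> (forall i, \int[mu]_x Em i x <= 1) ->
  \int[mu]_x (\sum_(i < n) (Ep i x + Em i x)) <= (2 * n)%:R%:E.
Proof.
move=> mEp mEm Ep0 Em0 iEp iEm.
rewrite ge0_integral_sum//; last 2 first.
- by move=> i; exact: emeasurable_funD.
- by move=> i x _; exact: adde_ge0.
apply: (@le_trans _ _ (\sum_(i < n) 2%:E)).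
  apply: lee_sum => i _; rewrite ge0_integralD//.
  by rewrite -[2%:E]/((1 + 1)%:E) EFinD; exact: leeD.
by rewrite sumEFin sumr_const card_ord lee_fin natrM mulr_natr.
Qed.

End integral_bounds.

Section false_coverage_proportion.
Local Open Scope ereal_scope.
Variables (R : realType) (k : nat).

Lemma miscovered_le_evalues (t : R) (l u ep em : \bar R) (b : R) :
  (0 < b)%R -> 0 <= ep -> 0 <= em ->
  (t%:E <= l -> b^-1%:E <= em) -> (u <= t%:E -> b^-1%:E <= ep) ->
  (miscovered l u t)%:R%:E <= b%:E * (ep + em).
Proof.
move=> b0 ep0 em0 hl hu.
have binvK : b%:E * b^-1%:E = 1 by rewrite -EFinM divff// gt_eqF.
have rhs0 : 0 <= b%:E * (ep + em) by rewrite mule_ge0 ?adde_ge0// lee_fin ltW.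
rewrite /miscovered; have [_|] := boolP (_ && _); first exact: rhs0.
rewrite negb_and -!leNgt => /orP[/hl|/hu] hE; rewrite -binvK;
  (apply: lee_wpmul2l; first by rewrite lee_fin ltW).
  exact: lee_paddl.
by rewrite addeC; exact: lee_paddl.
Qed.

Lemma fcp_le_evalues (S : {set 'I_k}) (th : 'I_k -> R)
    (l u Ep Em : 'I_k -> \bar R) (c : R) :
  (0 < c)%R -> (0 < #|S|)%N -> (forall i, 0 <= Ep i) -> (forall i, 0 <= Em i) ->
  (forall i, ((th i)%:E <= l i -> (c * #|S|%:R)^-1%:E <= Em i) /\
             (u i <= (th i)%:E -> (c * #|S|%:R)^-1%:E <= Ep i)) ->
  ((\sum_(i in S) (miscovered (l i) (u i) (th i))%:R) / #|S|%:R)%:E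
    <= c%:E * \sum_(i < k) (Ep i + Em i).
Proof.
move=> c0 S0 Ep0 Em0 hE.
have S0R : (0 < #|S|%:R :> R)%R by rewrite ltr0n.
have b0 : (0 < c * #|S|%:R)%R by rewrite mulr_gt0.
rewrite mulr_suml -sumEFin.
apply: (@le_trans _ _ (\sum_(i in S) c%:E * (Ep i + Em i))).
  apply: lee_sum => i _; rewrite -(@lee_pmul2r _ #|S|%:R%:E) ?lte_fin//.
  rewrite -EFinM mulfVK ?gt_eqF// muleAC -EFinM.
  by case: (hE i) => hl hu; exact: miscovered_le_evalues.
rewrite -ge0_sume_distrr => [|i _]; last exact: adde_ge0.
apply: lee_wpmul2l; first by rewrite lee_fin ltW.
rewrite [leRHS](bigID (mem S)) /=; apply: lee_paddr => //.
by apply: sume_ge0 => i _; exact: adde_ge0.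
Qed.

End false_coverage_proportion.

Section sFCR_evalues.
Local Open Scope ereal_scope.
Context (R : realType) d (Omega : measurableType d) (P : probability Omega R).
Variables (k : nat) (theta : 'I_k -> R) (L U : 'I_k -> R -> nat -> Omega -> \bar R).
Variables (tau : Omega -> option nat) (S : Omega -> {set 'I_k}).
Variables (Ep Em : 'I_k -> Omega -> \bar R) (c : R).

Definition evalue_bound (i : 'I_k) (b : R) (w : Omega) : Prop :=
  ((theta i)%:E <= L i b (stop_val tau w) w -> b^-1%:E <= Em i w) /\
  (U i b (stop_val tau w) w <= (theta i)%:E -> b^-1%:E <= Ep i w).

Hypotheses (c0 : (0 < c)%R) (ck1 : (c * k%:R < 1)%R).
Hypotheses (mEp : forall i, measurable_fun setT (Ep i))
           (mEm : forall i, measurable_fun setT (Em i)).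
Hypotheses (Ep0 : forall i w, 0 <= Ep i w) (Em0 : forall i w, 0 <= Em i w).
Hypotheses (iEp : forall i, \int[P]_w Ep i w <= 1)
           (iEm : forall i, \int[P]_w Em i w <= 1).
Hypothesis evalue_bound_ae :
  forall {i b}, (0 < b < 1)%R -> {ae P, forall w, evalue_bound i b w}.

Lemma evalue_bound_ae_levels :
  {ae P, forall w (i : 'I_k) (j : 'I_k.+1), (0 < j)%N ->
    evalue_bound i (c * j%:R) w}.
Proof.
apply: filter_forall => i; apply: filter_forall => j.
have [->|j0] := posnP j; first exact: nearW.
have jk : (j%:R <= k%:R :> R)%R by rewrite ler_nat -ltnS.
have level01 : (0 < c * j%:R < 1)%R.
  by rewrite mulr_gt0 ?ltr0n//= (le_lt_trans _ ck1)// ler_pM2l.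
by apply: filterS (@evalue_bound_ae i _ level01) => w hw _.
Qed.

Lemma sFCR_le_evalues (a : Omega -> R) :
  (forall w, a w = c * #|S w|%:R)%R ->
  sFCR P theta L U tau S a <= (c * (2 * k)%:R)%:E.
Proof.
move=> aE.
have sum0 w : 0 <= \sum_(i < k) (Ep i w + Em i w).
  by apply: sume_ge0 => i _; exact: adde_ge0.
have msum : measurable_fun setT (fun w => \sum_(i < k) (Ep i w + Em i w)).
  by apply: emeasurable_sum => i; exact: emeasurable_funD.
apply: (@le_trans _ _ (\int[P]_w (c%:E * \sum_(i < k) (Ep i w + Em i w))));
  last first.
  rewrite ge0_integralZl_EFin ?(ltW c0)// EFinM.
  apply: lee_wpmul2l; first by rewrite lee_fin ltW.
  exact: integral_sum_evalues_le.
apply: (@ae_ge0_le_integral_bounded _ _ _ P 1) => //.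
- move=> w; rewrite !lee_fin divr_ge0 ?sumr_ge0//=.
  have [->|S0] := posnP #|S w|; first by rewrite invr0 mulr0.
  rewrite ler_pdivrMr ?ltr0n// mul1r.
  apply: (@le_trans _ _ (\sum_(i in S w) 1)%R); last by rewrite sumr_const.
  by apply: ler_sum => i _; case: (~~ _); rewrite ?lexx ?ler01.
- exact: measurable_funeM.
- by move=> w; rewrite mule_ge0// lee_fin ltW.
apply: filterS evalue_bound_ae_levels => w hw.
have [->|S0] := posnP #|S w|; first by rewrite invr0 mulr0 mule_ge0// lee_fin ltW.
have Sk : (#|S w| < k.+1)%N by rewrite ltnS -[X in (_ <= X)%N]card_ord max_card.
apply: fcp_le_evalues => // i; rewrite aE.
exact: (hw i (Ordinal Sk)).
Qed.

End sFCR_evalues.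

Theorem theorem2 (R : realType) (d : measure_display) (Omega : measurableType d)
  (P : probability Omega R)
  (F : nat -> set (set Omega))
  (k m : nat) (theta : 'I_k -> R)
  (L U : 'I_k -> R -> nat -> Omega -> \bar R) :
  (* filtration *)
  (forall n, sigma_algebra setT (F n)) ->
  (forall n, F n `<=` measurable) ->
  (forall n, F n `<=` F n.+1) ->
  (* parameters *)
  (2 <= k)%N -> (1 <= m)%N -> (m <= k - 1)%N ->
  (forall i j : 'I_k, (i <= j)%N -> theta j <= theta i) ->
  (* adapted processes, L <= U, anytime-valid one-sided coverage *)
  (forall i b n (B : set (\bar R)), 0 < b < 1 -> (0 < n)%N -> measurable B ->
     F n (L i b n @^-1` B) /\ F n (U i b n @^-1` B)) ->
  (forall i b n w, 0 < b < 1 -> (0 < n)%N -> (L i b n w <= U i b n w)%E) ->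
  (forall i b, 0 < b < 1 ->
     (P [set w | exists n, (0 < n)%N /\ ((theta i)%:E <= L i b n w)%E]
        <= b%:E)%E /\
     (P [set w | exists n, (0 < n)%N /\ ((theta i)%:E >= U i b n w)%E]
        <= b%:E)%E) ->
  (* e-variable hypothesis *)
  (forall (i : 'I_k) (tau : Omega -> option nat),
     is_stopping_time F tau -> P [set w | tau w = None] = 0%E ->
     exists Ep Em : Omega -> \bar R,
       [/\ measurable_fun setT Ep /\ measurable_fun setT Em,
           (forall w, 0 <= Ep w)%E /\ (forall w, 0 <= Em w)%E,
           (\int[P]_w Ep w <= 1)%E /\ (\int[P]_w Em w <= 1)%E &
           forall b, 0 < b < 1 ->
             {ae P, forall w,
                 (((theta i)%:E <= L i b (stop_val tau w) w)%E ->
                    (Em w >= (b^-1)%:E)%E) /\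
                 (((theta i)%:E >= U i b (stop_val tau w) w)%E ->
                    (Ep w >= (b^-1)%:E)%E)}]) ->
  forall (alpha : R) (tau : Omega -> option nat),
    0 < alpha < 1 ->
    is_stopping_time F tau -> P [set w | tau w = None] = 0%E ->
    (sFCR P theta L U tau (scs_at m alpha L U tau)
       (fun w => (alpha * #|scs_at m alpha L U tau w|%:R / (2 * k%:R))%R)
     <= alpha%:E)%E.
Proof.
move=> _ _ _ k2 _ _ _ _ _ _ evalues alpha tau /andP[a0 a1] tauP tau_fin.
have [Ep /choice[Em evaluesE]] := choice (fun i => evalues i tau tauP tau_fin).
have k0 : (0 < k%:R :> R) by rewrite ltr0n (leq_trans _ k2).
pose c := alpha / (2 * k%:R).
have c0 : 0 < c by rewrite divr_gt0// mulr_gt0.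
have ck1 : c * k%:R < 1.
  have -> : c * k%:R = alpha / 2 by rewrite /c; field; rewrite gt_eqF.
  lra.
have -> : alpha%:E = (c * (2 * k)%:R)%:E.
  by rewrite /c natrM mulfVK// mulf_neq0// gt_eqF.
apply: (@sFCR_le_evalues _ _ _ P _ theta L U tau _ Ep Em c)
  => // [i|i|i w|i w|i|i|i b /=|w].
- by have [[]] := evaluesE i.
- by have [[]] := evaluesE i.
- by have [_ []] := evaluesE i.
- by have [_ []] := evaluesE i.
- by have [_ _ []] := evaluesE i.
- by have [_ _ []] := evaluesE i.
- by have [_ _ _ bound] := evaluesE i; exact: bound.
- by rewrite mulrAC.
Qed.
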